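(* Fix a formula $A$ and an annotated unary context $\Gamma\{-\}$. If $\vdash^A \Gamma\{\Diamond A^\perp_\emptyset\}$, then $\vdash^A \Gamma\{\}$.
   Context: Formulas: over a countable set of atoms $\alpha$ with duals $\alpha^\perp$, $A,B ::= \alpha \mid \alpha^\perp \mid A\land B \mid A\lor B \mid \Box A \mid \Diamond A$; negation $A^\perp$ by De Morgan duality ($(\alpha)^\perp=\alpha^\perp$, $(\alpha^\perp)^\perp=\alpha$, $\land/\lor$ dual, $(\Box A)^\perp=\Diamond A^\perp$, $(\Diamond A)^\perp=\Box A^\perp$). Annotated sequents: $\Gamma,\Delta ::= \cdot \mid \Gamma, C \mid \Gamma, \Diamond A_\Sigma \mid \Gamma,[\Delta]_B$, where $C$ is a formula not of the form $\Diamond A$, $\Sigma$ is a finite set of formulas (annotation set) and $B$ a formula (bracket annotation); sequents are taken up to exchange. Annotated unary contexts $\Gamma\{-\}$ (one hole) are defined analogously, $\Gamma\{\Delta\}$ is hole-filling, $\Gamma\{\}=\Gamma\{\cdot\}$. Annotated rules (whenever an active formula in a premise is a $\Diamond$-formula, its annotation is simply discarded): (id) $\Gamma\{\alpha^\perp,\alpha\}$, provided every $\Diamond$-formula occurrence in it has annotation $\emptyset$; ($\land$) from $\Gamma_1\{A\}$ and $\Gamma_2\{B\}$ infer $\Gamma\{A\land B\}$; ($\lor$) from $\Gamma\{A,B\}$ infer $\Gamma\{A\lor B\}$; ($\Box$) from $\Gamma\{[\Diamond A^\perp_\Sigma, A]_A\}$ infer $\Gamma\{\Box A\}$; ($\Diamond$)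 from $\Gamma\{\Delta\{[\Delta',A]_B\},\Diamond A_\Sigma\}$ infer $\Gamma\{\Delta\{[\Delta']_B\},\Diamond A_{\Sigma\cup\{B\}}\}$ (for any unary context $\Delta\{-\}$, possibly of depth $0$); (cut) from $\Gamma_1\{A\}$ and $\Gamma_2\{A^\perp\}$ infer $\Gamma\{\}$. In the two-premise rules, $\Gamma_1\{-\},\Gamma_2\{-\},\Gamma\{-\}$ are identical except for annotation sets of $\Diamond$-formula occurrences (bracket annotations coincide), and each $\Diamond$-formula occurrence in $\Gamma\{-\}$ has as annotation the union of the annotations of the corresponding occurrences in $\Gamma_1,\Gamma_2$. Fix a formula $A$; $\vdash^A\Gamma$ means the annotated sequent $\Gamma$ is derivable with the annotated rules (id), ($\land$), ($\lor$), ($\Box$), ($\Diamond$) together with those instances of (cut) whose cut formula is $A$. Convention: annotations not displayed in a statement (on $\Diamond$-formulas or brackets) are arbitrary; bracket annotations are the same in hypothesis and conclusion, while undisplayed $\Diamond$-annotations in the conclusion are existentially quantified. *)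

From HB Require Import structures.
From mathcomp Require Import all_boot.
From mathcomp Require Import finmap.
Set Implicit Arguments. Unset Strict Implicit. Unset Printing Implicit Defensive.
Local Open Scope fset_scope.

Inductive formula : Type :=
| Atom of nat
| NAtom of nat
| And of formula & formula
| Or of formula & formula
| Box of formula
| Dia of formula.

Fixpoint dual (A : formula) : formula :=
  match A with
  | Atom a => NAtom a
  | NAtom a => Atom a
  | And A B => Or (dual A) (dual B)
  | Or A B => And (dual A) (dual B)
  | Box A => Dia (dual A)
  | Dia A => Box (dual A)
  end.

Fixpoint formula_enc (A : formula) : GenTree.tree nat :=
  match A with
  | Atom a => GenTree.Node 0 [:: GenTree.Leaf a]
  | NAtom a => GenTree.Node 1 [:: GenTree.Leaf a]
  | And A B => GenTree.Node 2 [:: formula_enc A; formula_enc B]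
  | Or A B => GenTree.Node 3 [:: formula_enc A; formula_enc B]
  | Box A => GenTree.Node 4 [:: formula_enc A]
  | Dia A => GenTree.Node 5 [:: formula_enc A]
  end.

Fixpoint formula_dec (t : GenTree.tree nat) : option formula :=
  match t with
  | GenTree.Node 0 [:: GenTree.Leaf a] => Some (Atom a)
  | GenTree.Node 1 [:: GenTree.Leaf a] => Some (NAtom a)
  | GenTree.Node 2 [:: t1; t2] =>
      match formula_dec t1, formula_dec t2 with
      | Some A, Some B => Some (And A B) | _, _ => None end
  | GenTree.Node 3 [:: t1; t2] =>
      match formula_dec t1, formula_dec t2 with
      | Some A, Some B => Some (Or A B) | _, _ => None end
  | GenTree.Node 4 [:: t1] =>
      match formula_dec t1 with Some A => Some (Box A) | None => None end
  | GenTree.Node 5 [:: t1] =>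
      match formula_dec t1 with Some A => Some (Dia A) | None => None end
  | _ => None
  end.

Lemma formula_encK : pcancel formula_enc formula_dec.
Proof. by elim=> //= [A -> B -> | A -> B -> | A -> | A ->]. Qed.

HB.instance Definition _ := Countable.copy formula (pcan_type formula_encK).

(* A sequent is a list of items, taken up to (deep)
   exchange, see [eqv_seq] below.
   - [IForm C]     : a formula C (intended: C not of the form Dia _)
   - [IDia A S]    : the Diamond formula  Dia A  with annotation set S
   - [IBr D B]     : a bracket [D]_B with bracket annotation B *)
Inductive item : Type :=
| IForm of formula
| IDia of formula & {fset formula}
| IBr of list item & formula.

Definition sequent := list item.

(* Annotated unary contexts (exactly one hole), listed up to exchange:
   [CHole G]{D}     = G, D
   [CBr G c B]{D}   = G, [ c{D} ]_B *)
Inductive ctx : Type :=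
| CHole of sequent
| CBr of sequent & ctx & formula.

Fixpoint plug (c : ctx) (D : sequent) : sequent :=
  match c with
  | CHole G => G ++ D
  | CBr G c' B => G ++ [:: IBr (plug c' D) B]
  end.

(* The item for a formula A occurring (as active formula) in a premise;
   if A is a Diamond formula, its annotation Sg is arbitrary. *)
Definition fitem (A : formula) (Sg : {fset formula}) : item :=
  match A with
  | Dia X => IDia X Sg
  | _ => IForm A
  end.

Inductive eqv_seq : sequent -> sequent -> Prop :=
| eqv_nil : eqv_seq [::] [::]
| eqv_skip x y l l' : eqv_item x y -> eqv_seq l l' -> eqv_seq (x :: l) (y :: l')
| eqv_swap x y l : eqv_seq (x :: y :: l) (y :: x :: l)
| eqv_trans l1 l2 l3 : eqv_seq l1 l2 -> eqv_seq l2 l3 -> eqv_seq l1 l3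
with eqv_item : item -> item -> Prop :=
| eqvi_form C : eqv_item (IForm C) (IForm C)
| eqvi_dia A Sg : eqv_item (IDia A Sg) (IDia A Sg)
| eqvi_br D D' B : eqv_seq D D' -> eqv_item (IBr D B) (IBr D' B).

(* merge_* G1 G2 G : G1, G2, G are identical except for the annotation
   sets of Diamond occurrences, and each annotation in G is the union of
   the corresponding ones in G1 and G2. *)
Inductive merge_seq : sequent -> sequent -> sequent -> Prop :=
| merge_nil : merge_seq [::] [::] [::]
| merge_cons x1 x2 x l1 l2 l :
    merge_item x1 x2 x -> merge_seq l1 l2 l -> merge_seq (x1 :: l1) (x2 :: l2) (x :: l)
with merge_item : item -> item -> item -> Prop :=
| mergei_form C : merge_item (IForm C) (IForm C) (IForm C)
| mergei_dia A Sg1 Sg2 : merge_item (IDia A Sg1) (IDia A Sg2) (IDia A (Sg1 `|` Sg2))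
| mergei_br D1 D2 D B : merge_seq D1 D2 D -> merge_item (IBr D1 B) (IBr D2 B) (IBr D B).

Inductive merge_ctx : ctx -> ctx -> ctx -> Prop :=
| mergec_hole G1 G2 G : merge_seq G1 G2 G -> merge_ctx (CHole G1) (CHole G2) (CHole G)
| mergec_br G1 G2 G c1 c2 c B :
    merge_seq G1 G2 G -> merge_ctx c1 c2 c -> merge_ctx (CBr G1 c1 B) (CBr G2 c2 B) (CBr G c B).

Inductive similar_seq : sequent -> sequent -> Prop :=
| sim_nil : similar_seq [::] [::]
| sim_cons x y l l' : similar_item x y -> similar_seq l l' -> similar_seq (x :: l) (y :: l')
with similar_item : item -> item -> Prop :=
| simi_form C : similar_item (IForm C) (IForm C)
| simi_dia A Sg1 Sg2 : similar_item (IDia A Sg1) (IDia A Sg2)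
| simi_br D D' B : similar_seq D D' -> similar_item (IBr D B) (IBr D' B).

Inductive similar_ctx : ctx -> ctx -> Prop :=
| simc_hole G G' : similar_seq G G' -> similar_ctx (CHole G) (CHole G')
| simc_br G G' c c' B :
    similar_seq G G' -> similar_ctx c c' -> similar_ctx (CBr G c B) (CBr G' c' B).

Definition is_dia (A : formula) : bool := if A is Dia _ then true else false.

(* Well-formedness plus "every Diamond occurrence has annotation empty",
   the side condition of (id).  Well-formedness: items [IForm C] never carry
   a Diamond formula. *)
Fixpoint id_ok_item (x : item) : bool :=
  match x with
  | IForm C => ~~ is_dia C
  | IDia _ Sg => Sg == fset0
  | IBr D _ => all id_ok_item D
  end.
Definition id_ok (G : sequent) : bool := all id_ok_item G.

(* provable A0 G  :  |-^{A0} G  (annotated rules, cuts only on A0). *)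
Inductive provable (A0 : formula) : sequent -> Prop :=
| r_exch G G' : eqv_seq G G' -> provable A0 G -> provable A0 G'
| r_id (c : ctx) (a : nat) :
    id_ok (plug c [:: IForm (NAtom a); IForm (Atom a)]) ->
    provable A0 (plug c [:: IForm (NAtom a); IForm (Atom a)])
| r_and c1 c2 c A B Sg1 Sg2 :
    merge_ctx c1 c2 c ->
    provable A0 (plug c1 [:: fitem A Sg1]) ->
    provable A0 (plug c2 [:: fitem B Sg2]) ->
    provable A0 (plug c [:: IForm (And A B)])
| r_or c A B Sg1 Sg2 :
    provable A0 (plug c [:: fitem A Sg1; fitem B Sg2]) ->
    provable A0 (plug c [:: IForm (Or A B)])
| r_box c A Sg Sg' :
    provable A0 (plug c [:: IBr [:: IDia (dual A) Sg; fitem A Sg'] A]) ->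
    provable A0 (plug c [:: IForm (Box A)])
| r_dia c (d : ctx) D' A B Sg Sg' :
    provable A0 (plug c (plug d [:: IBr (D' ++ [:: fitem A Sg']) B] ++ [:: IDia A Sg])) ->
    provable A0 (plug c (plug d [:: IBr D' B] ++ [:: IDia A (Sg `|` [fset B])]))
| r_cut c1 c2 c Sg1 Sg2 :
    merge_ctx c1 c2 c ->
    provable A0 (plug c1 [:: fitem A0 Sg1]) ->
    provable A0 (plug c2 [:: fitem (dual A0) Sg2]) ->
    provable A0 (plug c [::]).

From mathcomp Require Import all_boot finmap.
Set Implicit Arguments. Unset Strict Implicit.
Local Open Scope fset_scope.

(* An occurrence of a Diamond formula with empty annotation is never principal
   in (Dia), whose conclusion annotation contains the bracket annotation, and
   in a two-premise rule an empty annotation can only come from empty ones.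
   Erasing the occurrence from every sequent of a derivation therefore yields
   a derivation again, so the context itself is a witness. *)

Section EraseEmptyDiamond.
Variable X : formula.

Inductive erase : sequent -> sequent -> Prop :=
| erase_here l : erase (IDia X fset0 :: l) l
| erase_cons x l l' : erase l l' -> erase (x :: l) (x :: l')
| erase_br D D' B l : erase D D' -> erase (IBr D B :: l) (IBr D' B :: l).

Inductive erase_ctx : ctx -> ctx -> Prop :=
| erasec_hole G G' : erase G G' -> erase_ctx (CHole G) (CHole G')
| erasec_brG G G' c B : erase G G' -> erase_ctx (CBr G c B) (CBr G' c B)
| erasec_br G c c' B : erase_ctx c c' -> erase_ctx (CBr G c B) (CBr G c' B).

Lemma erase_forms (l : seq formula) T : ~ erase [seq IForm C | C <- l] T.
Proof. elim: l T => [|C l IH] T /= H; inversion H as [|x k k' Hk|]; exact: IH Hk. Qed.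

Lemma erase_catl l l' m : erase l l' -> erase (l ++ m) (l' ++ m).
Proof. by elim=> *; constructor. Qed.

Lemma erase_catr l m m' : erase m m' -> erase (l ++ m) (l ++ m').
Proof. by elim: l => //= x l IH /IH; constructor. Qed.

Lemma erase_cat l m T : erase (l ++ m) T ->
  (exists2 l', erase l l' & T = l' ++ m) \/ (exists2 m', erase m m' & T = l ++ m').
Proof.
elim: l T => [|x l IH] T /= H; first by right; exists T.
inversion H as [k|z k k' Hk|D D' B k HD]; subst.
- by left; exists l => //; constructor.
- have [[l1 Hl1 ->]|[m1 Hm1 ->]] := IH _ Hk; last by right; exists m1.
  by left; exists (x :: l1) => //; constructor.
- by left; exists (IBr D' B :: l) => //; constructor.
Qed.

Lemma erase_ctx_plug c c' D : erase_ctx c c' -> erase (plug c D) (plug c' D).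
Proof.
by elim=> /= *; [apply: erase_catl | apply: erase_catl | apply/erase_catr/erase_br].
Qed.

Lemma erase_plug c D D' : erase D D' -> erase (plug c D) (plug c D').
Proof.
by move=> HD; elim: c => /= [G|G c IH B]; apply: erase_catr => //; apply: erase_br.
Qed.

Lemma erase_br1P D B T :
  erase [:: IBr D B] T -> exists2 D', erase D D' & T = [:: IBr D' B].
Proof.
move E: [:: _] => l H; case: H E => // [x k k' H|D1 D2 B1 k H].
- by case=> _ Ek; move: H; rewrite -Ek => /(@erase_forms [::]).
- by case=> -> -> ->; exists D2.
Qed.

Lemma erase_plugP c D T : erase (plug c D) T ->
  (exists2 c', erase_ctx c c' & T = plug c' D) \/
  (exists2 D', erase D D' & T = plug c D').
Proof.
elim: c T => [G|G c IH B] T /= /erase_cat [[G' HG ->]|[m Hm ->]].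
- by left; exists (CHole G') => //; constructor.
- by right; exists m.
- by left; exists (CBr G' c B) => //; constructor.
- have [E /IH [[c' Hc' ->]|[D' HD ->]] ->] := erase_br1P Hm; last by right; exists D'.
  by left; exists (CBr G c' B) => //; constructor.
Qed.

Lemma erase_plug_forms c (l : seq formula) T :
  erase (plug c [seq IForm C | C <- l]) T ->
  exists2 c', erase_ctx c c' & T = plug c' [seq IForm C | C <- l].
Proof. by case/erase_plugP => // -[D /erase_forms]. Qed.

Lemma id_ok_erase S T : erase S T -> id_ok S -> id_ok T.
Proof.
rewrite /id_ok; elim=> /= [l|x l l' _ IH|D D' B l _ IH]; first by [].
- by case/andP=> -> /IH.
- by case/andP=> /IH -> ->.
Qed.

Lemma merge_item_empty_dia A x1 x2 : merge_item x1 x2 (IDia A fset0) ->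
  x1 = IDia A fset0 /\ x2 = IDia A fset0.
Proof.
move E: (IDia A fset0) => y H; case: H E => // B Sg1 Sg2 [<- /eqP].
by rewrite eq_sym fsetU_eq0 => /andP[/eqP-> /eqP->]; rewrite fsetU0.
Qed.

Lemma merge_erase_seq l l' : erase l l' -> forall l1 l2, merge_seq l1 l2 l ->
  exists l1' l2', [/\ erase l1 l1', erase l2 l2' & merge_seq l1' l2' l'].
Proof.
elim=> [m|x m m' _ IH|D D' B m _ IH] l1 l2 Hm;
  inversion Hm as [|x1 x2 y k1 k2 k Hx Hk]; subst.
- have [-> ->] := merge_item_empty_dia Hx.
  by exists k1, k2; split => //; constructor.
- have [k1' [k2' [H1 H2 Hk']]] := IH _ _ Hk.
  by exists (x1 :: k1'), (x2 :: k2'); split; constructor.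
- inversion Hx as [| |D1 D2 D0 B0 HD]; subst.
  have [D1' [D2' [H1 H2 HD']]] := IH _ _ HD.
  by exists (IBr D1' B :: k1), (IBr D2' B :: k2); split; do !constructor.
Qed.

Lemma merge_erase_ctx c c' : erase_ctx c c' -> forall c1 c2, merge_ctx c1 c2 c ->
  exists c1' c2', [/\ erase_ctx c1 c1', erase_ctx c2 c2' & merge_ctx c1' c2' c'].
Proof.
elim=> [G G' HG|G G' d B HG|G d d' B _ IH] c1 c2 Hm;
  inversion Hm as [G1 G2 G0 HG0|G1 G2 G0 d1 d2 d0 B0 HG0 Hd0]; subst.
- have [G1' [G2' [H1 H2 HG']]] := merge_erase_seq HG HG0.
  by exists (CHole G1'), (CHole G2'); split; constructor.
- have [G1' [G2' [H1 H2 HG']]] := merge_erase_seq HG HG0.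
  by exists (CBr G1' d1 B), (CBr G2' d2 B); split; constructor.
- have [d1' [d2' [H1 H2 Hd']]] := IH _ _ Hd0.
  by exists (CBr G1 d1' B), (CBr G2 d2' B); split; constructor.
Qed.

Fixpoint eqv_item_refl (x : item) : eqv_item x x :=
  match x with
  | IForm C => eqvi_form C
  | IDia A Sg => eqvi_dia A Sg
  | IBr D B => eqvi_br B ((fix eqv_seq_refl (l : sequent) : eqv_seq l l :=
       match l with
       | [::] => eqv_nil
       | y :: l' => eqv_skip (eqv_item_refl y) (eqv_seq_refl l')
       end) D)
  end.

Lemma eqv_seq_refl l : eqv_seq l l.
Proof. by elim: l => [|x l IH]; constructor => //; apply: eqv_item_refl. Qed.

Scheme eqv_seq_mut := Induction for eqv_seq Sort Prop
  with eqv_item_mut := Induction for eqv_item Sort Prop.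

Lemma eqv_erase S S' : eqv_seq S S' -> forall T', erase S' T' ->
  exists2 T, erase S T & eqv_seq T T'.
Proof.
move=> H; apply: (@eqv_seq_mut
  (fun l l' (_ : eqv_seq l l') =>
     forall T', erase l' T' -> exists2 T, erase l T & eqv_seq T T')
  (fun x y (_ : eqv_item x y) => forall D' B T', y = IBr D' B -> erase D' T' ->
      exists D T, [/\ x = IBr D B, erase D T & eqv_seq T T'])) H => {S S'}.
- by move=> T' /(@erase_forms [::]).
- move=> x y l l' Hxy IHxy Hl IHl T' HT.
  inversion HT as [k|z k k' Hk|D D' B k HD]; subst.
  + by inversion Hxy; subst; exists l => //; constructor.
  + have [T HT1 HT2] := IHl _ Hk.
    by exists (x :: T); constructor.
  + have [E [T [-> HE HET]]] := IHxy _ _ _ erefl HD.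
    by exists (IBr T B :: l) => //; do !constructor.
- move=> x y l T' HT.
  inversion HT as [k|z k k' Hk|D D' B k HD]; subst.
  + by exists (x :: l); [apply/erase_cons/erase_here | apply: eqv_seq_refl].
  + inversion Hk as [m|z m m' Hm|D D' B m HD]; subst.
    * by exists (y :: k'); [apply: erase_here | apply: eqv_seq_refl].
    * by exists (x :: y :: m'); [do 2!apply: erase_cons | apply: eqv_swap].
    * by exists (IBr D' B :: y :: l); [apply: erase_br | apply: eqv_swap].
  + by exists (x :: IBr D' B :: l); [apply/erase_cons/erase_br | apply: eqv_swap].
- move=> l1 l2 l3 _ IH1 _ IH2 T3 HT3.
  have [T2 HT2 E2] := IH2 _ HT3; have [T1 HT1 E1] := IH1 _ HT2.
  by exists T1 => //; apply: eqv_trans E1 E2.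
- by [].
- by [].
- move=> D D' B _ IH D2 B2 T' [<- <-] HT.
  by have [T HT1 HT2] := IH _ HT; exists D, T.
Qed.

Lemma erase_dia_nonempty A B Sg T : ~ erase [:: IDia A (Sg `|` [fset B])] T.
Proof.
move E: [:: _] => l H; case: H E => [k|x k k' H|D D' B' k H] //.
- case=> _ /(congr1 (fun S => B \in S)).
  by rewrite in_fset0 in_fsetU in_fset1 eqxx orbT.
- by case=> _ Ek; move: H; rewrite -Ek => /(@erase_forms [::]).
Qed.

Lemma provable_erase A0 S : provable A0 S -> forall T, erase S T -> provable A0 T.
Proof.
elim=> {S}.
- move=> G G' E _ IH T HT.
  have [T0 H0 E0] := eqv_erase E HT.
  exact: r_exch E0 (IH _ H0).
- move=> c a Hok T /(@erase_plug_forms _ [:: NAtom a; Atom a]) [c' Hc ->].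
  exact/r_id/(id_ok_erase (erase_ctx_plug _ Hc)).
- move=> c1 c2 c A B Sg1 Sg2 M _ IH1 _ IH2 T.
  case/(@erase_plug_forms _ [:: And A B]) => c' Hc ->.
  have [c1' [c2' [H1 H2 M']]] := merge_erase_ctx Hc M.
  exact: r_and M' (IH1 _ (erase_ctx_plug _ H1)) (IH2 _ (erase_ctx_plug _ H2)).
- move=> c A B Sg1 Sg2 _ IH T /(@erase_plug_forms _ [:: Or A B]) [c' Hc ->].
  exact/r_or/IH/erase_ctx_plug.
- move=> c A Sg Sg' _ IH T /(@erase_plug_forms _ [:: Box A]) [c' Hc ->].
  exact/r_box/IH/erase_ctx_plug.
- move=> c d D' A B Sg Sg' _ IH T /erase_plugP [[c' Hc ->]|[D HD ->]].
    exact/r_dia/IH/erase_ctx_plug.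
  case/erase_cat: HD => [[l Hl ->]|[m /erase_dia_nonempty]] //.
  case/erase_plugP: Hl => [[d' Hd ->]|[E /erase_br1P[D'' HD ->] ->]];
    apply: (r_dia (Sg' := Sg')).
  + exact/IH/erase_plug/erase_catl/erase_ctx_plug.
  + exact/IH/erase_plug/erase_catl/erase_plug/erase_br/erase_catl.
- move=> c1 c2 c Sg1 Sg2 M _ IH1 _ IH2 T.
  case/(@erase_plug_forms _ [::]) => c' Hc ->.
  have [c1' [c2' [H1 H2 M']]] := merge_erase_ctx Hc M.
  exact: r_cut M' (IH1 _ (erase_ctx_plug _ H1)) (IH2 _ (erase_ctx_plug _ H2)).
Qed.

End EraseEmptyDiamond.

Fixpoint similar_item_refl (x : item) : similar_item x x :=
  match x with
  | IForm C => simi_form C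
  | IDia A Sg => simi_dia A Sg Sg
  | IBr D B => simi_br B ((fix similar_seq_refl (l : sequent) : similar_seq l l :=
       match l with
       | [::] => sim_nil
       | y :: l' => sim_cons (similar_item_refl y) (similar_seq_refl l')
       end) D)
  end.

Lemma similar_seq_refl l : similar_seq l l.
Proof. by elim: l => [|x l IH]; constructor => //; apply: similar_item_refl. Qed.

Lemma similar_ctx_refl c : similar_ctx c c.
Proof. by elim: c => [G|G c IH B]; constructor => //; apply: similar_seq_refl. Qed.

Theorem mainTheorem10 (A : formula) (G : ctx) :
  provable A (plug G [:: IDia (dual A) fset0]) ->
  exists G', similar_ctx G G' /\ provable A (plug G' [::]).
Proof.
move=> P; exists G; split; first exact: similar_ctx_refl.
by apply: (provable_erase P); apply/erase_plug/erase_here.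
Qed.
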